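(* For each $C>0$ and $K>1$ there exists $D=D(K,C)>C$ with the following property. Let $\kappa$ be a $K$-contracting axis from $x$ to $x'$ and $\eta$ a $K$-contracting axis from $y'$ to $y$ in a geodesic metric space $X$. Suppose that $\operatorname{diam}(x'\cup\pi_\kappa(y'))<C$ and $\operatorname{diam}(y'\cup\pi_\eta(x))<C$. Then $\operatorname{diam}(x'\cup\pi_\kappa(\eta))<D$ and $\operatorname{diam}(y'\cup\pi_\eta(\kappa))<D$.
   Context: $X$ is a geodesic metric space. For $A\subseteq X$ and $z\in X$, $\pi_A(z)=\{a\in A:d(z,a)=d(z,A)\}$, and $\pi_A(B)=\bigcup_{b\in B}\pi_A(b)$. A set $A$ is $K$-contracting if $\pi_A(z)\ne\emptyset$ for all $z$ and for $x,y$ with $d(x,y)\le d(x,A)-K$ one has $\operatorname{diam}(\pi_A(x)\cup\pi_A(y))\le K$. A $K$-quasigeodesic is a map $\gamma$ from an interval of $\mathbb R$ or a set of consecutive integers to $X$ with $|s-t|/K-K\le d(\gamma(s),\gamma(t))\le K|s-t|+K$; a $K$-contracting axis is a $K$-quasigeodesic whose image is $K$-contracting, and ''from $a$ to $b$'' means its initial point is $a$ and terminal point is $b$. Projections onto a path mean projections onto its image. *)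

From Stdlib Require Import Reals ZArith.
Open Scope R_scope.

Section Metric.
Variable X : Type.
Variable d : X -> X -> R.

Definition is_metric : Prop :=
  (forall x y, 0 <= d x y) /\
  (forall x y, d x y = 0 <-> x = y) /\
  (forall x y, d x y = d y x) /\
  (forall x y z, d x z <= d x y + d y z).

Definition geodesic_space : Prop :=
  forall x y : X, exists g : R -> X,
    g 0 = x /\ g (d x y) = y /\
    forall s t, 0 <= s <= d x y -> 0 <= t <= d x y -> d (g s) (g t) = Rabs (s - t).

(* pi_A(z) = { a in A : d(z,a) = d(z,A) }, where d(z,A) = inf_{b in A} d(z,b);
   written out: a in A and d(z,a) <= d(z,b) for all b in A. *)
Definition proj (A : X -> Prop) (z : X) : X -> Prop :=
  fun a => A a /\ forall b, A b -> d z a <= d z b.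

Definition proj_set (A B : X -> Prop) : X -> Prop :=
  fun a => exists b, B b /\ proj A b a.

Definition union (A B : X -> Prop) : X -> Prop := fun p => A p \/ B p.
Definition single (x : X) : X -> Prop := fun p => p = x.

Definition diam_le (S : X -> Prop) (r : R) : Prop :=
  forall p q, S p -> S q -> d p q <= r.

(* diam S < r  (diam S = sup of distances, possibly +oo) *)
Definition diam_lt (S : X -> Prop) (r : R) : Prop :=
  exists B, B < r /\ diam_le S B.

(* A is K-contracting. The hypothesis d(x,y) <= d(x,A) - K, with
   d(x,A) = inf_{a in A} d(x,a), is written out as: for all a in A,
   d(x,y) <= d(x,a) - K. *)
Definition contracting (K : R) (A : X -> Prop) : Prop :=
  (forall z, exists a, proj A z a) /\
  (forall x y, (forall a, A a -> d x y <= d x a - K) ->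
     diam_le (union (proj A x) (proj A y)) K).

(* Domain of a path with an initial and terminal point: either the real
   interval [a,b] or the set of consecutive integers {m,...,n} (a = m, b = n). *)
Definition path_domain (I : R -> Prop) (a b : R) : Prop :=
  a <= b /\
  ((forall t, I t <-> a <= t <= b) \/
   (exists m n : Z, a = IZR m /\ b = IZR n /\
      forall t, I t <-> exists k : Z, t = IZR k /\ (m <= k <= n)%Z)).

Definition quasigeodesic (K : R) (I : R -> Prop) (gamma : R -> X) : Prop :=
  forall s t, I s -> I t ->
    Rabs (s - t) / K - K <= d (gamma s) (gamma t) /\
    d (gamma s) (gamma t) <= K * Rabs (s - t) + K.

Definition image (I : R -> Prop) (gamma : R -> X) : X -> Prop :=
  fun p => exists t, I t /\ gamma t = p.

Definition contracting_axis (K : R) (I : R -> Prop) (a b : R)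
    (gamma : R -> X) (p q : X) : Prop :=
  path_domain I a b /\ quasigeodesic K I gamma /\
  contracting K (image I gamma) /\ gamma a = p /\ gamma b = q.

End Metric.

From Stdlib Require Import Reals Lra Lia Classical.
Open Scope R_scope.

(* A geodesic whose endpoints project more than 14K apart onto a K-contracting set passes
   within 20K of the projection of its far end, and a geodesic with both endpoints on such a set stays
   within 60K of it.  Let b lie on eta and p be a projection of b onto kappa.  Along a geodesic
   from y' to b, either p is close to the projection of y' (hence to x'), or p is 80K-close to
   eta.  In the latter case run a geodesic from x to p: either y' is close to p, or the
   geodesic passes near the projection of x onto eta, hence near y' and near x'.  This geodesic
   fellow-travels kappa, which runs from x to x' and ends at p, so p must be close to x'.
   Projecting back, the projections of kappa onto eta are controlled by the first bound. *)

Lemma last_time_approx (P : R -> Prop) a b e : 0 < e ->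
  (exists t, a <= t <= b /\ P t) ->
  exists ts t1, a <= t1 <= ts /\ ts <= b /\ ts - e < t1 /\ P t1 /\
    forall t, ts < t <= b -> ~ P t.
Proof.
  intros He Hex.
  set (E := fun t => a <= t <= b /\ P t).
  assert (Hbound : bound E) by (exists b; intros t [Ht _]; lra).
  destruct (completeness E Hbound Hex) as [ts [Hub Hlub]].
  assert (Hnear : exists t1, E t1 /\ ts - e < t1).
  { apply NNPP; intro Hno.
    assert (ts <= ts - e); [|lra].
    apply Hlub; intros t Et; apply Rnot_lt_le; intro Hlt; apply Hno; exists t; auto. }
  destruct Hnear as [t1 [[Ht1 HPt1] Hlt]].
  assert (Ht1ts : t1 <= ts) by (apply Hub; split; auto).
  assert (Htsb : ts <= b) by (apply Hlub; intros t [Ht _]; lra).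
  exists ts, t1; repeat split; auto; try lra.
  intros t Ht HPt; assert (t <= ts) by (apply Hub; split; [lra | auto]); lra.
Qed.

Lemma unit_step_induction (P Q : R -> Prop) a b : a <= b -> P a ->
  (forall u v, a <= u -> u <= v -> v <= b -> v - u <= 1 -> P u -> P v \/ Q u) ->
  P b \/ exists u, a <= u <= b /\ Q u.
Proof.
  intros Hab Ha Hstep.
  set (t n := Rmin (a + INR n) b).
  assert (Ht : forall n, a <= t n <= b /\ t n <= t (S n) /\ t (S n) - t n <= 1).
  { intro n; unfold t; rewrite S_INR; pose proof (pos_INR n).
    unfold Rmin; repeat destruct Rle_dec; lra. }
  assert (Hreach : forall n, P (t n) \/ exists u, a <= u <= b /\ Q u).
  { induction n as [|n [IH|IH]]; [| |right; exact IH].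
    - left; unfold t; simpl; rewrite Rplus_0_r, Rmin_left; auto.
    - destruct (Ht n) as [Hn [Hmono Hgap]]; destruct (Ht (S n)) as [HSn _].
      destruct (Hstep (t n) (t (S n))) as [HP|HQ]; try lra; auto.
      right; exists (t n); auto. }
  destruct (INR_archimed 1 (b - a) ltac:(lra)) as [N HN].
  assert (HtN : t N = b) by (unfold t; rewrite Rmin_right; lra).
  destruct (Hreach N) as [HP|HQ]; [left; rewrite <- HtN; exact HP | right; exact HQ].
Qed.

Lemma path_domain_ends I a b :
  path_domain I a b -> I a /\ I b /\ forall t, I t -> a <= t <= b.
Proof.
  intros [Hab [HI|[m [n [Ha [Hb HI]]]]]].
  - split; [apply HI; lra|]; split; [apply HI; lra|].
    intros t Ht; apply HI in Ht; exact Ht.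
  - assert (Hmn : (m <= n)%Z) by (apply le_IZR; lra).
    split; [|split].
    + apply HI; exists m; split; [exact Ha | lia].
    + apply HI; exists n; split; [exact Hb | lia].
    + intros t Ht; apply HI in Ht; destruct Ht as [j [Htj Hj]]; subst t a b;
        split; apply IZR_le; lia.
Qed.

Section Metric.
Variables (X : Type) (d : X -> X -> R).
Hypothesis Hm : is_metric X d.

Lemma dist_ge0 x y : 0 <= d x y.
Proof. destruct Hm as [H _]; apply H. Qed.

Lemma dist_xx x : d x x = 0.
Proof. destruct Hm as [_ [H _]]; apply H; reflexivity. Qed.

Lemma dist_sym x y : d x y = d y x.
Proof. destruct Hm as [_ [_ [H _]]]; apply H. Qed.

Lemma dist_triangle x y z : d x z <= d x y + d y z.
Proof. destruct Hm as [_ [_ [_ H]]]; apply H. Qed.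

Lemma proj_refl A a : A a -> proj X d A a a.
Proof. intro Ha; split; [exact Ha|]; intros b _; rewrite dist_xx; apply dist_ge0. Qed.

Definition geodesic_on (g : R -> X) (s1 s2 : R) : Prop :=
  forall s t, s1 <= s <= s2 -> s1 <= t <= s2 -> d (g s) (g t) = Rabs (s - t).

Lemma geodesic_on_dist g s1 s2 s t :
  geodesic_on g s1 s2 -> s1 <= s -> s <= t -> t <= s2 -> d (g s) (g t) = t - s.
Proof. intros Hg H1 H2 H3; rewrite Hg, Rabs_left1; lra. Qed.

Lemma geodesic_on_sub g s1 s2 a b :
  geodesic_on g s1 s2 -> s1 <= a -> b <= s2 -> geodesic_on g a b.
Proof. intros Hg Ha Hb s t Hs Ht; apply Hg; lra. Qed.

Lemma geodesic_on_rev g s1 s2 :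
  geodesic_on g s1 s2 -> geodesic_on (fun s => g (- s)) (- s2) (- s1).
Proof.
  intros Hg s t Hs Ht; rewrite Hg by lra.
  replace (- s - - t) with (- (s - t)) by ring; apply Rabs_Ropp.
Qed.

Lemma geodesic_segment u v : geodesic_space X d ->
  exists g, geodesic_on g 0 (d u v) /\ g 0 = u /\ g (d u v) = v.
Proof.
  intros Hgeo; destruct (Hgeo u v) as [g [H0 [H1 Hg]]].
  exists g; repeat split; auto; intros s t Hs Ht; apply Hg; auto.
Qed.

Section Contracting.
Variables (K : R) (A : X -> Prop).
Hypothesis HK : 0 < K.
Hypothesis HA : contracting X d K A.

Lemma proj_exists z : exists a, proj X d A z a.
Proof. apply HA. Qed.

Lemma proj_far_contract u v p q :
  proj X d A u p -> proj X d A v q -> d u v <= d u p - K -> d p q <= K.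
Proof.
  intros Hp Hq Huv; apply (proj2 HA u v); [|left|right]; auto.
  intros a Ha; pose proof (proj2 Hp a Ha); lra.
Qed.

Lemma proj_lipschitz u v p q :
  proj X d A u p -> proj X d A v q -> d p q <= 3 * d u v + 2 * K.
Proof.
  intros Hp Hq; pose proof (dist_ge0 u v).
  destruct (Rle_dec (d u v) (d u p - K)) as [Hu|Hu].
  { pose proof (proj_far_contract u v p q Hp Hq Hu); lra. }
  destruct (Rle_dec (d v u) (d v q - K)) as [Hv|Hv].
  { pose proof (proj_far_contract v u q p Hq Hp Hv); pose proof (dist_sym p q); lra. }
  pose proof (dist_triangle p u q); pose proof (dist_triangle u v q).
  pose proof (dist_sym p u); pose proof (dist_sym u v); lra.
Qed.

Lemma proj_contraction_ball u v p q :
  proj X d A u p -> proj X d A v q -> d u v <= Rmax (d u p - K) 0 -> d p q <= 2 * K.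
Proof.
  intros Hp Hq; unfold Rmax; destruct (Rle_dec (d u p - K) 0) as [Hle|Hgt]; intro Huv.
  - pose proof (proj_lipschitz u v p q Hp Hq); lra.
  - pose proof (proj_far_contract u v p q Hp Hq Huv); lra.
Qed.

Lemma proj_diam u p q : proj X d A u p -> proj X d A u q -> d p q <= 2 * K.
Proof. intros Hp Hq; pose proof (proj_lipschitz u u p q Hp Hq); rewrite dist_xx in H; lra. Qed.

Lemma proj_step_far g s1 s2 s s' a b :
  geodesic_on g s1 s2 -> s1 <= s -> s <= s' -> s' <= s2 -> s' - s <= 2 * K ->
  (forall c, A c -> 3 * K <= d (g s') c) ->
  proj X d A (g s) a -> proj X d A (g s') b -> d a b <= K.
Proof.
  intros Hg H1 H2 H3 Hss' Hfar Ha Hb.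
  assert (Hfar_b : 3 * K <= d (g s') b) by (apply Hfar, Hb).
  pose proof (geodesic_on_dist g s1 s2 s s' Hg H1 H2 H3); pose proof (dist_sym (g s) (g s')).
  pose proof (proj_far_contract (g s') (g s) b a Hb Ha ltac:(lra)); pose proof (dist_sym a b); lra.
Qed.

Lemma proj_along_far_geodesic g s1 s2 s s' a b :
  geodesic_on g s1 s2 -> s1 <= s -> s <= s' -> s' <= s2 ->
  (forall t, s < t <= s' -> forall c, A c -> 3 * K <= d (g t) c) ->
  proj X d A (g s) a -> proj X d A (g s') b -> d a b <= (s' - s) / 2 + 2 * K.
Proof.
  intros Hg H1 H2 H3 Hfar Ha Hb.
  destruct (INR_archimed (2 * K) (s' - s) ltac:(lra)) as [n Hn].
  revert s' b H2 H3 Hn Hfar Hb; induction n as [|n IH]; intros s' b H2 H3 Hn Hfar Hb.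
  - simpl in Hn; assert (s' = s) by lra; subst s'.
    pose proof (proj_diam _ _ _ Ha Hb); lra.
  - rewrite S_INR in Hn.
    destruct (Rle_dec (s' - s) (2 * K)) as [Hshort|Hlong].
    + destruct (Req_dec s s') as [<-|Hne].
      * pose proof (proj_diam _ _ _ Ha Hb); lra.
      * pose proof (proj_step_far g s1 s2 s s' a b Hg H1 H2 H3 Hshort
                      (Hfar s' ltac:(lra)) Ha Hb); lra.
    + set (m := s' - 2 * K).
      assert (Hm_def : m = s' - 2 * K) by reflexivity; clearbody m.
      destruct (proj_exists (g m)) as [c Hc].
      pose proof (proj_step_far g s1 s2 m s' c b Hg ltac:(lra) ltac:(lra) H3 ltac:(lra)
                    (Hfar s' ltac:(lra)) Hc Hb).
      assert (d a c <= (m - s) / 2 + 2 * K).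
      { apply (IH m c); try lra; auto.
        intros t Ht; apply Hfar; lra. }
      pose proof (dist_triangle a c b); lra.
Qed.

Lemma proj_end_bound g s1 s2 s a p :
  geodesic_on g s1 s2 -> s1 <= s -> s <= s2 ->
  (forall t, s < t <= s2 -> forall c, A c -> 3 * K <= d (g t) c) ->
  proj X d A (g s) a -> proj X d A (g s2) p -> d a p <= d (g s) a + 9 * K.
Proof.
  intros Hg H1 H2 Hfar Ha Hp.
  set (beta := Rmax (d (g s2) p - K) 0).
  assert (Hbeta : d (g s2) p - K <= beta /\ 0 <= beta) by (split; [apply Rmax_l | apply Rmax_r]).
  pose proof (geodesic_on_dist g s1 s2 s s2 Hg H1 H2 (Rle_refl _)).
  pose proof (dist_sym (g s) (g s2)).
  pose proof (dist_triangle (g s) a (g s2)); pose proof (dist_triangle a p (g s2)).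
  pose proof (dist_sym p (g s2)); pose proof (dist_sym a p); pose proof (dist_ge0 (g s) a).
  destruct (Rle_dec (s2 - s) beta) as [Hshort|Hlong].
  - pose proof (proj_contraction_ball (g s2) (g s) p a Hp Ha
                  ltac:(change (Rmax (d (g s2) p - K) 0) with beta; lra)).
    lra.
  - set (m := s2 - beta).
    assert (Hm_def : m = s2 - beta) by reflexivity.
    destruct (proj_exists (g m)) as [c Hc].
    pose proof (geodesic_on_dist g s1 s2 m s2 Hg ltac:(lra) ltac:(lra) (Rle_refl _)).
    pose proof (dist_sym (g m) (g s2)).
    pose proof (proj_contraction_ball (g s2) (g m) p c Hp Hc
                  ltac:(change (Rmax (d (g s2) p - K) 0) with beta; lra)).
    clearbody m.
    pose proof (proj_along_far_geodesic g s1 s2 s m a c Hg H1 ltac:(lra) ltac:(lra)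
                  ltac:(intros t Ht; apply Hfar; lra) Ha Hc).
    pose proof (dist_triangle a c p); pose proof (dist_sym c p); lra.
Qed.

Lemma proj_far_geodesic g s1 s2 q p :
  geodesic_on g s1 s2 -> s1 <= s2 ->
  (forall t, s1 <= t <= s2 -> forall c, A c -> 3 * K <= d (g t) c) ->
  proj X d A (g s1) q -> proj X d A (g s2) p -> d q p <= 14 * K.
Proof.
  intros Hg H12 Hfar Hq Hp.
  set (alpha := Rmax (d (g s1) q - K) 0).
  set (beta := Rmax (d (g s2) p - K) 0).
  assert (Halpha : d (g s1) q - K <= alpha /\ 0 <= alpha) by (split; [apply Rmax_l | apply Rmax_r]).
  assert (Hbeta : d (g s2) p - K <= beta /\ 0 <= beta) by (split; [apply Rmax_l | apply Rmax_r]).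
  (* [g] is cut into [s1, t1], [t1, t2], [t2, s2]: projections barely move on the outer
     pieces (they lie in the contraction balls of the endpoints) and move at half speed on
     the middle one. *)
  set (t1 := Rmin (s1 + alpha) s2).
  set (t2 := Rmax (s2 - beta) t1).
  assert (Ht : s1 <= t1 <= t2 /\ t2 <= s2 /\ t1 - s1 <= alpha /\ s2 - t2 <= beta /\
               (t2 - t1 <= 0 \/ (t1 = s1 + alpha /\ t2 = s2 - beta))).
  { unfold t2, t1; clearbody alpha beta; unfold Rmax, Rmin.
    repeat destruct Rle_dec; repeat split; try lra; first [left; lra | right; split; lra]. }
  destruct (proj_exists (g t1)) as [q1 Hq1].
  destruct (proj_exists (g t2)) as [p2 Hp2].
  pose proof (geodesic_on_dist g s1 s2 s1 t1 Hg (Rle_refl _) ltac:(lra) ltac:(lra)).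
  pose proof (geodesic_on_dist g s1 s2 t2 s2 Hg ltac:(lra) ltac:(lra) (Rle_refl _)).
  pose proof (geodesic_on_dist g s1 s2 s1 s2 Hg (Rle_refl _) H12 (Rle_refl _)).
  pose proof (proj_contraction_ball (g s1) (g t1) q q1 Hq Hq1
                ltac:(change (Rmax (d (g s1) q - K) 0) with alpha; lra)).
  pose proof (proj_contraction_ball (g s2) (g t2) p p2 Hp Hp2
                ltac:(rewrite dist_sym; change (Rmax (d (g s2) p - K) 0) with beta; lra)).
  pose proof (proj_along_far_geodesic g s1 s2 t1 t2 q1 p2 Hg ltac:(lra) ltac:(lra) ltac:(lra)
                ltac:(intros t Htt; apply Hfar; lra) Hq1 Hp2).
  pose proof (dist_triangle (g s1) q (g s2)); pose proof (dist_triangle q p (g s2)).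
  pose proof (dist_triangle q q1 p); pose proof (dist_triangle q1 p2 p).
  pose proof (dist_sym p (g s2)); pose proof (dist_sym p2 p).
  clearbody alpha beta t1 t2; lra.
Qed.

Lemma bounded_geodesic_image g s1 s2 q p :
  geodesic_on g s1 s2 -> s1 <= s2 -> proj X d A (g s1) q -> proj X d A (g s2) p ->
  d q p <= 14 * K \/ exists t, s1 <= t <= s2 /\ d (g t) p <= 20 * K.
Proof.
  intros Hg H12 Hq Hp.
  set (Near := fun t => exists c, A c /\ d (g t) c < 3 * K).
  assert (Hfar : forall t, ~ Near t -> forall c, A c -> 3 * K <= d (g t) c).
  { intros t Ht c Hc; apply Rnot_lt_le; intro Hlt; apply Ht; exists c; auto. }
  destruct (classic (exists t, s1 <= t <= s2 /\ Near t)) as [Hex|Hnone].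
  - right.
    destruct (last_time_approx Near s1 s2 K HK Hex)
      as [ts [t1 [Ht1 [Hts [Hclose [[c [Hc Hc3]] Hlast]]]]]].
    exists ts; split; [lra|].
    destruct (proj_exists (g ts)) as [a Ha].
    pose proof (proj_end_bound g s1 s2 ts a p Hg ltac:(lra) Hts
                  (fun t Ht => Hfar t (Hlast t Ht)) Ha Hp).
    pose proof (proj2 Ha c Hc); pose proof (dist_triangle (g ts) (g t1) c).
    pose proof (geodesic_on_dist g s1 s2 t1 ts Hg ltac:(lra) ltac:(lra) Hts).
    pose proof (dist_sym (g t1) (g ts)); pose proof (dist_triangle (g ts) a p); lra.
  - left; apply (proj_far_geodesic g s1 s2 q p Hg H12); auto.
    intros t Ht; apply Hfar; intro Hn; apply Hnone; exists t; auto.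
Qed.

Lemma bounded_geodesic_image_rev g s1 s2 q p :
  geodesic_on g s1 s2 -> s1 <= s2 -> proj X d A (g s1) q -> proj X d A (g s2) p ->
  d q p <= 14 * K \/ exists t, s1 <= t <= s2 /\ d (g t) q <= 20 * K.
Proof.
  intros Hg H12 Hq Hp.
  destruct (bounded_geodesic_image (fun s => g (- s)) (- s2) (- s1) p q
              (geodesic_on_rev g s1 s2 Hg) ltac:(lra))
    as [Hpq|[t [Ht Hgt]]]; rewrite ?Ropp_involutive; auto.
  - left; rewrite dist_sym; exact Hpq.
  - right; exists (- t); split; [lra | exact Hgt].
Qed.

Lemma geodesic_near_contracting g s1 s2 t :
  geodesic_on g s1 s2 -> A (g s1) -> A (g s2) -> s1 <= t <= s2 ->
  exists a, A a /\ d (g t) a <= 60 * K.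
Proof.
  intros Hg HA1 HA2 Ht.
  destruct (proj_exists (g t)) as [a Ha].
  exists a; split; [apply Ha|].
  assert (Hleft : exists t1, s1 <= t1 <= t /\ d (g t1) a <= 20 * K).
  { destruct (bounded_geodesic_image g s1 t (g s1) a
                (geodesic_on_sub g s1 s2 s1 t Hg ltac:(lra) ltac:(lra))
                ltac:(lra) (proj_refl A _ HA1) Ha) as [Hd|Hex]; [|exact Hex].
    exists s1; split; lra. }
  assert (Hright : exists t2, t <= t2 <= s2 /\ d (g t2) a <= 20 * K).
  { destruct (bounded_geodesic_image_rev g t s2 a (g s2)
                (geodesic_on_sub g s1 s2 t s2 Hg ltac:(lra) ltac:(lra))
                ltac:(lra) Ha (proj_refl A _ HA2)) as [Hd|Hex]; [|exact Hex].
    exists s2; split; [lra|]; rewrite dist_sym; lra. }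
  destruct Hleft as [t1 [Ht1 Hd1]]; destruct Hright as [t2 [Ht2 Hd2]].
  pose proof (geodesic_on_dist g s1 s2 t1 t Hg ltac:(lra) ltac:(lra) ltac:(lra)).
  pose proof (geodesic_on_dist g s1 s2 t1 t2 Hg ltac:(lra) ltac:(lra) ltac:(lra)).
  pose proof (dist_triangle (g t1) a (g t2)); pose proof (dist_sym (g t2) a).
  pose proof (dist_triangle (g t) (g t1) a); pose proof (dist_sym (g t) (g t1)); lra.
Qed.

End Contracting.

Lemma proj_contracting_pair K A B : geodesic_space X d -> 0 < K ->
  contracting X d K A -> contracting X d K B ->
  forall u b q p, B u -> B b -> proj X d A u q -> proj X d A b p ->
  d q p <= 14 * K \/ exists b', B b' /\ d p b' <= 80 * K.
Proof.
  intros Hgeo HK HA HB u b q p Hu Hb Hq Hp.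
  destruct (geodesic_segment u b Hgeo) as [g [Hg [Hg0 Hg1]]].
  pose proof (dist_ge0 u b).
  destruct (bounded_geodesic_image K A HK HA g 0 (d u b) q p Hg ltac:(lra)
              ltac:(rewrite Hg0; exact Hq) ltac:(rewrite Hg1; exact Hp)) as [Hqp|[t [Ht Hgt]]].
  { left; exact Hqp. }
  destruct (geodesic_near_contracting K B HK HB g 0 (d u b) t Hg
              ltac:(rewrite Hg0; exact Hu) ltac:(rewrite Hg1; exact Hb) Ht) as [b' [Hb' Hgb']].
  right; exists b'; split; [exact Hb'|].
  pose proof (dist_triangle p (g t) b'); pose proof (dist_sym p (g t)); lra.
Qed.

Section Quasigeodesic.
Variables (K : R) (I : R -> Prop) (k : R -> X).
Hypothesis HK : 0 < K.
Hypothesis Hk : quasigeodesic X d K I k.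

Lemma quasigeodesic_param_le s s' r :
  I s -> I s' -> d (k s) (k s') <= r -> s' - s <= K * (r + K).
Proof.
  intros Hs Hs' Hr; destruct (Hk s s' Hs Hs') as [Hlow _].
  assert (Habs : Rabs (s - s') <= K * (r + K)).
  { apply (Rmult_le_reg_r (/ K)); [apply Rinv_0_lt_compat, HK|].
    replace (K * (r + K) * / K) with (r + K) by (field; lra); unfold Rdiv in Hlow; lra. }
  rewrite Rabs_minus_sym in Habs; pose proof (Rle_abs (s' - s)); lra.
Qed.

Lemma quasigeodesic_dist_le s s' J :
  I s -> I s' -> Rabs (s - s') <= J -> d (k s) (k s') <= K * J + K.
Proof.
  intros Hs Hs' HJ; destruct (Hk s s' Hs Hs') as [_ Hup].
  pose proof (Rmult_le_compat_l K _ _ (Rlt_le _ _ HK) HJ); lra.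
Qed.

Lemma geodesic_along_axis_end g s1 s2 tau E ak bk t :
  0 <= E -> geodesic_on g s1 s2 -> s1 <= tau <= s2 ->
  (forall u, s1 <= u <= s2 -> exists s, I s /\ d (g u) (k s) <= E) ->
  I ak -> I bk -> I t -> ak <= t <= bk ->
  g s1 = k ak -> g s2 = k t -> d (g tau) (k bk) <= E ->
  d (k bk) (k t) <= 2 * E + K * (K * (2 * E + 1 + K)) + K.
Proof.
  intros HE Hg Htau Hnear Hak Hbk Ht Hakt Hs1 Hs2 Hend.
  set (J := K * (2 * E + 1 + K)).
  set (Near u s := I s /\ d (g u) (k s) <= E).
  (* Walking along [g] in unit steps, a parameter of [k] close to [g u] jumps by at most [J];
     it starts at [ak <= t] and ends within [J] of [bk >= t], so at some time it lies in
     [t - J, t]. *)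
  destruct (unit_step_induction (fun u => exists s, Near u s /\ s <= t)
              (fun u => exists s, Near u s /\ t - J <= s <= t) s1 tau ltac:(lra))
    as [[s [[Hs Hgs] Hst]]|[u [Hu [s [[Hs Hgs] Hst]]]]].
  - exists ak; split; [|lra]; split; [exact Hak|]; rewrite Hs1, dist_xx; exact HE.
  - intros u v Hu Huv Hv Hstep [s [[Hs Hgs] Hst]].
    destruct (Hnear v ltac:(lra)) as [s' [Hs' Hgs']].
    destruct (Rle_dec s' t) as [Hs't|Hs't]; [left; exists s'; repeat split; auto|right].
    exists s; repeat split; auto; try lra.
    pose proof (geodesic_on_dist g s1 s2 u v Hg ltac:(lra) Huv ltac:(lra)).
    pose proof (dist_triangle (k s) (g u) (k s')); pose proof (dist_triangle (g u) (g v) (k s')).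
    pose proof (dist_sym (k s) (g u)).
    pose proof (quasigeodesic_param_le s s' (2 * E + 1) Hs Hs' ltac:(lra)) as Hjump.
    fold J in Hjump; lra.
  - pose proof (dist_triangle (k s) (g tau) (k bk)); pose proof (dist_sym (k s) (g tau)).
    pose proof (quasigeodesic_param_le s bk (2 * E + 1) Hs Hbk ltac:(lra)) as Hjump.
    fold J in Hjump.
    pose proof (geodesic_on_dist g s1 s2 tau s2 Hg ltac:(lra) ltac:(lra) (Rle_refl _)).
    pose proof (dist_triangle (k bk) (g tau) (g s2)); pose proof (dist_sym (k bk) (g tau)).
    pose proof (quasigeodesic_dist_le s t J Hs Ht ltac:(apply Rabs_le; lra)).
    pose proof (dist_triangle (g tau) (k s) (k t)); rewrite <- Hs2 in *; lra.
  - pose proof (quasigeodesic_dist_le s t J Hs Ht ltac:(apply Rabs_le; lra)).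
    pose proof (dist_triangle (g u) (k s) (k t)); rewrite <- Hs2 in *.
    pose proof (geodesic_on_dist g s1 s2 u s2 Hg ltac:(lra) ltac:(lra) (Rle_refl _)).
    pose proof (geodesic_on_dist g s1 s2 tau s2 Hg ltac:(lra) ltac:(lra) (Rle_refl _)).
    pose proof (dist_triangle (k bk) (g tau) (g s2)); pose proof (dist_sym (k bk) (g tau)); lra.
Qed.

End Quasigeodesic.

Definition fellow_radius (K C : R) : R := 100 * K + 3 * C.

Definition end_radius (K C : R) : R :=
  2 * fellow_radius K C + K * (K * (2 * fellow_radius K C + 1 + K)) + K.

Definition start_radius (K C : R) : R := end_radius K C + 160 * K + 2 * C.

Lemma end_radius_ge K C : 0 < K -> 0 <= C -> 2 * fellow_radius K C + K <= end_radius K C.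
Proof.
  intros HK HC; unfold end_radius.
  assert (0 <= K * (K * (2 * fellow_radius K C + 1 + K))); [|lra].
  unfold fellow_radius; apply Rmult_le_pos; [lra|]; apply Rmult_le_pos; lra.
Qed.

Section Axes.
Variables (K C : R) (Ik : R -> Prop) (ak bk : R) (kappa : R -> X) (B : X -> Prop).
Variables (x x' y' z q' : X).
Local Notation A := (image X Ik kappa).
Hypothesis Hgeo : geodesic_space X d.
Hypothesis HK : 0 < K.
Hypothesis HC : 0 <= C.
Hypothesis Hkappa : quasigeodesic X d K Ik kappa.
Hypothesis HA : contracting X d K A.
Hypothesis HB : contracting X d K B.
Hypothesis Hak : Ik ak.
Hypothesis Hbk : Ik bk.
Hypothesis Hdom : forall t, Ik t -> ak <= t <= bk.
Hypothesis Hx : kappa ak = x.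
Hypothesis Hx' : kappa bk = x'.
Hypothesis Hy' : B y'.
Hypothesis Hz : proj X d B x z.
Hypothesis Hyz : d y' z <= C.
Hypothesis Hq' : proj X d A y' q'.
Hypothesis Hxq : d x' q' <= C.

Lemma start_near_axis a r : A a -> d z a <= r -> d y' q' <= C + r.
Proof.
  intros Ha Hza; pose proof (proj2 Hq' a Ha); pose proof (dist_triangle y' z a); lra.
Qed.

Lemma geodesic_near_start_proj g p tau :
  geodesic_on g 0 (d x p) -> g 0 = x -> g (d x p) = p -> A p -> 0 <= tau <= d x p ->
  d (g tau) z <= 20 * K -> d p x' <= end_radius K C.
Proof.
  intros Hg Hg0 Hg1 HAp Htau Hgz.
  assert (HAx : A x) by (exists ak; auto).
  assert (Hnear : forall u, 0 <= u <= d x p -> exists a, A a /\ d (g u) a <= 60 * K).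
  { intros u Hu; apply (geodesic_near_contracting K A HK HA g 0 (d x p) u Hg); auto;
      [rewrite Hg0 | rewrite Hg1]; assumption. }
  destruct (Hnear tau Htau) as [a [Ha Hga]].
  pose proof (dist_triangle z (g tau) a); pose proof (dist_sym z (g tau)).
  pose proof (start_near_axis a (80 * K) Ha ltac:(lra)).
  pose proof (dist_triangle (g tau) z x'); pose proof (dist_triangle z y' x').
  pose proof (dist_triangle y' q' x'); pose proof (dist_sym z y'); pose proof (dist_sym q' x').
  destruct HAp as [tp [Htp Hptp]].
  rewrite <- Hptp, <- Hx', dist_sym; unfold end_radius, fellow_radius.
  apply (geodesic_along_axis_end K Ik kappa HK Hkappa g 0 (d x p) tau _ ak); auto; try lra.
  - intros u Hu; destruct (Hnear u Hu) as [a' [[s [Hs <-]] Hga']].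
    exists s; split; [exact Hs | lra].
  - congruence.
  - congruence.
  - rewrite Hx'; lra.
Qed.

Lemma proj_onto_axis_near_end b p : B b -> proj X d A b p -> d p x' <= end_radius K C.
Proof.
  intros Hb Hp.
  pose proof (end_radius_ge K C HK HC); unfold fellow_radius in *.
  pose proof (dist_sym q' x').
  destruct (proj_contracting_pair K A B Hgeo HK HA HB y' b q' p Hy' Hb Hq' Hp)
    as [Hq'p|[b1 [Hb1 Hpb1]]].
  { pose proof (dist_triangle p q' x'); pose proof (dist_sym p q'); lra. }
  destruct (proj_exists K B HB p) as [w Hw].
  pose proof (proj2 Hw b1 Hb1).
  assert (HAp : A p) by apply Hp.
  destruct (geodesic_segment x p Hgeo) as [g [Hg [Hg0 Hg1]]].
  pose proof (dist_ge0 x p).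
  destruct (bounded_geodesic_image_rev K B HK HB g 0 (d x p) z w Hg ltac:(lra)
              ltac:(rewrite Hg0; exact Hz) ltac:(rewrite Hg1; exact Hw))
    as [Hzw|[tau [Htau Hgz]]].
  - pose proof (dist_triangle z w p); pose proof (dist_sym w p).
    pose proof (start_near_axis p (94 * K) HAp ltac:(lra)).
    pose proof (dist_triangle y' z p); pose proof (dist_triangle p y' x').
    pose proof (dist_sym p y'); pose proof (dist_triangle y' q' x'); lra.
  - exact (geodesic_near_start_proj g p tau Hg Hg0 Hg1 HAp Htau Hgz).
Qed.

Lemma proj_onto_eta_near_start a q : A a -> proj X d B a q -> d q y' <= start_radius K C.
Proof.
  intros Ha Hq.
  pose proof (end_radius_ge K C HK HC); unfold start_radius, fellow_radius in *.
  assert (HAx : A x) by (exists ak; auto).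
  pose proof (dist_triangle q z y'); pose proof (dist_sym z y').
  destruct (proj_contracting_pair K B A Hgeo HK HB HA x a z q HAx Ha Hz Hq)
    as [Hzq|[a1 [Ha1 Hqa1]]].
  { pose proof (dist_sym z q); lra. }
  destruct (proj_contracting_pair K B A Hgeo HK HB HA a x q z Ha HAx Hq Hz)
    as [Hqz|[a2 [Ha2 Hza2]]].
  { lra. }
  pose proof (start_near_axis a2 (80 * K) Ha2 Hza2).
  destruct (proj_exists K A HA q) as [p Hp].
  pose proof (proj_onto_axis_near_end q p (proj1 Hq) Hp).
  pose proof (proj2 Hp a1 Ha1).
  pose proof (dist_triangle q p y'); pose proof (dist_triangle p x' y');
    pose proof (dist_triangle x' q' y'); pose proof (dist_sym q' y'); lra.
Qed.

End Axes.

Lemma diam_lt_union_single c S r D : 0 <= r -> 2 * r < D ->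
  (forall p, S p -> d p c <= r) -> diam_lt X d (union X (single X c) S) D.
Proof.
  intros Hr HD HS; exists (2 * r); split; [exact HD|].
  intros p q Hp Hq.
  assert (Hpc : d p c <= r) by (destruct Hp as [->|Hp]; [rewrite dist_xx | apply HS]; auto).
  assert (Hqc : d q c <= r) by (destruct Hq as [->|Hq]; [rewrite dist_xx | apply HS]; auto).
  pose proof (dist_triangle p c q); pose proof (dist_sym c q); lra.
Qed.

Lemma diam_lt_single_le c S D p : diam_lt X d (union X (single X c) S) D -> S p -> d c p < D.
Proof. intros [r [HrD Hr]] Hp; pose proof (Hr c p (or_introl eq_refl) (or_intror Hp)); lra. Qed.

End Metric.

Theorem lemma3p3 :
  forall C K : R, 0 < C -> 1 < K ->
  exists D : R, C < D /\
  forall (X : Type) (d : X -> X -> R),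
    is_metric X d -> geodesic_space X d ->
    forall (Ik : R -> Prop) (ak bk : R) (kappa : R -> X)
           (Ie : R -> Prop) (ae be : R) (eta : R -> X)
           (x x' y y' : X),
      contracting_axis X d K Ik ak bk kappa x x' ->
      contracting_axis X d K Ie ae be eta y' y ->
      diam_lt X d (union X (single X x') (proj X d (image X Ik kappa) y')) C ->
      diam_lt X d (union X (single X y') (proj X d (image X Ie eta) x)) C ->
      diam_lt X d (union X (single X x')
                     (proj_set X d (image X Ik kappa) (image X Ie eta))) D /\
      diam_lt X d (union X (single X y')
                     (proj_set X d (image X Ie eta) (image X Ik kappa))) D.
Proof.
  intros C K HC HK.
  assert (Hrad : 0 <= end_radius K C < start_radius K C).
  { pose proof (end_radius_ge K C ltac:(lra) ltac:(lra)).
    unfold start_radius, fellow_radius in *; lra. }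
  exists (C + 2 * start_radius K C); split; [lra|].
  intros X d Hm Hgeo Ik ak bk kappa Ie ae be eta x x' y y'
    [Hkdom [Hkappa [HA [Hx Hx']]]] [Hedom [_ [HB [Hy' _]]]] Hdiam1 Hdiam2.
  destruct (path_domain_ends Ik ak bk Hkdom) as [Hak [Hbk Hdom]].
  destruct (path_domain_ends Ie ae be Hedom) as [Hae _].
  assert (Hy'eta : image X Ie eta y') by (exists ae; auto).
  destruct (proj_exists X d K _ HA y') as [q' Hq'].
  destruct (proj_exists X d K _ HB x) as [z Hz].
  pose proof (diam_lt_single_le X d x' _ C q' Hdiam1 Hq').
  pose proof (diam_lt_single_le X d y' _ C z Hdiam2 Hz).
  split.
  - apply (diam_lt_union_single X d Hm x' _ (end_radius K C)); try lra.
    intros p [b [Hb Hp]].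
    apply (proj_onto_axis_near_end X d Hm K C Ik ak bk kappa (image X Ie eta) x x' y' z q')
      with (b := b); auto; lra.
  - apply (diam_lt_union_single X d Hm y' _ (start_radius K C)); try lra.
    intros q [a [Ha Hq]].
    apply (proj_onto_eta_near_start X d Hm K C Ik ak bk kappa (image X Ie eta) x x' y' z q')
      with (a := a); auto; lra.
Qed.
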